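(* Let $H$ be a graph whose number $c(H)$ of connected components satisfies $c(H)\ge 2$. (a) If $c(H)\ge 4$, then $O_{\rm SR}(K_1\odot H)=\mathcal{B}$. (b) If $c(H)=3$, then $O_{\rm SR}(K_1\odot H)=\mathcal{N}$ if $H\cong 3K_1$, and $O_{\rm SR}(K_1\odot H)=\mathcal{B}$ otherwise. (c) If $c(H)=2$, then $O_{\rm SR}(K_1\odot H)=\mathcal{M}$ if $H\cong 2K_1$; $O_{\rm SR}(K_1\odot H)=\mathcal{N}$ if $H\in\{K_1\cup K_2, K_1\cup P_3\}$ or $H\cong K_1\cup H^*$, where $H^*$ is a connected graph of order $m\ge 4$ such that $\deg_{H^*}(w)\in\{m-2,m-1\}$ for each $w\in V(H^* )$ and at most two vertices of $H^*$ have degree $m-1$; and $O_{\rm SR}(K_1\odot H)=\mathcal{B}$ otherwise.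
   Context: All graphs are finite, simple and undirected. $P_n,K_n$ denote the path and complete graph on $n$ vertices; $kK_1$ is the edgeless graph on $k$ vertices and $\cup$ denotes disjoint union. $K_1\odot H$ (the corona product of $K_1$ with $H$) is the graph obtained from $H$ by adding one new vertex adjacent to every vertex of $H$. A set $S\subseteq V(X)$ is a strong resolving set of a connected graph $X$ if for all distinct $x,y\in V(X)$ there exists $z\in S$ such that $x$ lies on a $y$–$z$ geodesic or $y$ lies on an $x$–$z$ geodesic. The Maker–Breaker strong resolving game on $X$: Maker and Breaker alternately select a not-yet-chosen vertex of $X$; Maker wins if the vertices he selects contain a strong resolving set of $X$, Breaker wins otherwise. In the M-game Maker moves first, in the B-game Breaker moves first. $O_{\rm SR}(X)=\mathcal{M}$ if Maker has a winning strategy in both games, $\mathcal{B}$ if Breaker has a winning strategy in both, and $\mathcal{N}$ if the first player has a winning strategy in each. *)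

From mathcomp Require Import all_boot.
Set Implicit Arguments. Unset Strict Implicit. Unset Printing Implicit Defensive.

(** Graphs are given by a vertex finType and an adjacency relation;
    a (finite simple) graph has a symmetric irreflexive relation. *)

Definition on_geodesic (V : finType) (adj : rel V) (x y z : V) : Prop :=
  exists p : seq V,
    [/\ path adj y p, last y p = z, x \in y :: p &
        forall q : seq V, path adj y q -> last y q = z -> size p <= size q].

Definition strong_resolving (V : finType) (adj : rel V) (S : {set V}) : Prop :=
  forall x y : V, x != y ->
    exists2 z, z \in S & (on_geodesic adj x y z \/ on_geodesic adj y x z).

(** Maker-Breaker strong resolving game. M = Maker's vertices, B = Breaker's.
    The game ends when all vertices are chosen; fuel k >= number of free vertices. *)
Fixpoint maker_wins (V : finType) (adj : rel V) (k : nat) (maker_turn : bool)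
    (M B : {set V}) : Prop :=
  if ~: (M :|: B) == set0 then strong_resolving adj M else
  match k with
  | 0 => strong_resolving adj M
  | k'.+1 =>
    if maker_turn then exists v, v \notin M :|: B /\ maker_wins adj k' false (v |: M) B
    else forall v, v \notin M :|: B -> maker_wins adj k' true M (v |: B)
  end.

Fixpoint breaker_wins (V : finType) (adj : rel V) (k : nat) (maker_turn : bool)
    (M B : {set V}) : Prop :=
  if ~: (M :|: B) == set0 then ~ strong_resolving adj M else
  match k with
  | 0 => ~ strong_resolving adj M
  | k'.+1 =>
    if maker_turn then forall v, v \notin M :|: B -> breaker_wins adj k' false (v |: M) B
    else exists v, v \notin M :|: B /\ breaker_wins adj k' true M (v |: B)
  end.

Definition maker_wins_Mgame (V : finType) (adj : rel V) := maker_wins adj #|V| true set0 set0.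
Definition maker_wins_Bgame (V : finType) (adj : rel V) := maker_wins adj #|V| false set0 set0.
Definition breaker_wins_Mgame (V : finType) (adj : rel V) := breaker_wins adj #|V| true set0 set0.
Definition breaker_wins_Bgame (V : finType) (adj : rel V) := breaker_wins adj #|V| false set0 set0.

Definition OSR_M (V : finType) (adj : rel V) := maker_wins_Mgame adj /\ maker_wins_Bgame adj.
Definition OSR_B (V : finType) (adj : rel V) := breaker_wins_Mgame adj /\ breaker_wins_Bgame adj.
Definition OSR_N (V : finType) (adj : rel V) := maker_wins_Mgame adj /\ breaker_wins_Bgame adj.

(** K_1 (.) H : the new vertex is None. *)
Definition corona_adj (T : finType) (e : rel T) : rel (option T) :=
  fun u v => match u, v with
             | None, None => false
             | None, Some _ => true
             | Some _, None => true
             | Some x, Some y => e x y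
             end.

Definition ncomp (T : finType) (e : rel T) : nat :=
  #|[set [set y | connect e x y] | x : T]|.

Definition connected_graph (T : finType) (e : rel T) : Prop :=
  forall x y : T, connect e x y.

Definition deg (T : finType) (e : rel T) (x : T) : nat := #|[set y | e x y]|.

Definition isomorphic (T1 T2 : finType) (e1 : rel T1) (e2 : rel T2) : Prop :=
  exists f : T1 -> T2, bijective f /\ forall x y, e2 (f x) (f y) = e1 x y.

Definition edgeless (k : nat) : rel 'I_k := fun _ _ => false.
Definition complete (n : nat) : rel 'I_n := fun i j => i != j.
Definition pathg (n : nat) : rel 'I_n :=
  fun i j => (i.+1 == j :> nat) || (j.+1 == i :> nat).
Arguments edgeless k : clear implicits.
Arguments complete n : clear implicits.
Arguments pathg n : clear implicits.

Definition gunion (T1 T2 : finType) (e1 : rel T1) (e2 : rel T2) : rel (T1 + T2) :=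
  fun u v => match u, v with
             | inl x, inl y => e1 x y
             | inr x, inr y => e2 x y
             | _, _ => false
             end.

Definition K1_union_Hstar (T : finType) (e : rel T) : Prop :=
  exists (U : finType) (f : rel U),
    [/\ symmetric f, irreflexive f, connected_graph f, 4 <= #|U| &
      [/\ (forall w : U, deg f w = #|U| - 2 \/ deg f w = #|U| - 1),
        #|[set w | deg f w == #|U| - 1]| <= 2 &
        isomorphic e (gunion (edgeless 1) f)]].

Definition caseN2 (T : finType) (e : rel T) : Prop :=
  isomorphic e (gunion (edgeless 1) (complete 2)) \/
  isomorphic e (gunion (edgeless 1) (pathg 3)) \/
  K1_union_Hstar e.

(* In K_1 (.) H every vertex of H has a non-neighbour (H has at least two
   components) and the diameter is 2, so a set of vertices is strong resolving
   iff it meets every edge of the graph R of mutually maximally distant pairs: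
   the pairs of vertices of H that are non-adjacent, or adjacent true twins.
   The game is thus the Maker-Breaker game of covering the edges of R.  Maker
   wins if R, after deleting the vertex he claims first (when he starts), is a
   matching: he answers every vertex of Breaker with its R-partner.  Breaker
   wins if R, after deleting the vertex Maker claims first (if any), still has
   a cherry, i.e. a vertex with two R-neighbours: he claims the centre and then
   whichever leaf Maker left.
   Vertices in different components of H are R-adjacent.  Three components
   plus one more vertex, or two components of size at least 2, give a 4-cycle
   in R, which keeps a cherry after deleting any vertex.  Otherwise H = K_1 u G
   with G connected, the isolated vertex is R-adjacent to everything, and
   R - K_1 is a matching iff every vertex of G has at most one non-neighbour
   and at most two vertices of G are universal, which singles out K_2, P_3 and
   the graphs H^*. *)

From mathcomp Require Import all_boot zify.
From Stdlib Require Import Classical_Prop.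
Set Implicit Arguments. Unset Strict Implicit. Unset Printing Implicit Defensive.

Lemma card_setC_setU1 (V : finType) (S : {set V}) v :
  v \notin S -> #|~: S| = #|~: (v |: S)|.+1.
Proof.
move=> vS; rewrite setCU (cardsD1 v (~: S)) inE vS add1n; congr _.+1.
by apply: eq_card => x; rewrite !inE andbC.
Qed.

Lemma exists_notin (T : finType) (s : seq T) : size s < #|T| -> exists w, w \notin s.
Proof.
move=> sT; apply/existsP; rewrite -negb_forall; apply: contraTN sT => /forallP ins.
rewrite -leqNgt; apply: leq_trans (card_size s).
by apply/subset_leq_card/subsetP => w _; apply: ins.
Qed.

Lemma enum_of_card (T : finType) (s : seq T) : uniq s -> size s = #|T| -> forall w, w \in s.
Proof.
move=> us sT w; apply: contraT => ws; have := max_card (mem (w :: s)).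
by rewrite (card_uniqP _) /= ?ws // sT ltnn.
Qed.

Lemma card_le1_notin (T : finType) (X : {set T}) x y :
  #|X| <= 1 -> x \in X -> y != x -> y \notin X.
Proof. by move=> /card_le1_eqP X1 xX; apply: contra => yX; rewrite (X1 y x). Qed.

Section CoverRelations.
Variables (V : finType) (R : rel V).

Definition covers (M : {set V}) := forall x y, R x y -> (x \in M) || (y \in M).

Definition cherry_off (X : {set V}) := exists v a b,
  [/\ v \notin X, a \notin X, b \notin X & [/\ a != b, R v a & R v b]].

Definition matching_off (X : {set V}) := forall x y z,
  R x y -> R x z -> x \notin X -> y \notin X -> z \notin X -> y = z.

Lemma cherry_offS (X Y : {set V}) : X \subset Y -> cherry_off Y -> cherry_off X.
Proof.
move=> /subsetP sXY [v [a [b [vY aY bY rest]]]].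
have nX z : z \notin Y -> z \notin X by apply: contra (sXY z).
by exists v, a, b; split; rewrite ?nX.
Qed.

Lemma matching_offS (X Y : {set V}) : X \subset Y -> matching_off X -> matching_off Y.
Proof.
move=> /subsetP sXY hX x y z rxy rxz xY yY zY.
by apply: (hX _ _ _ rxy rxz); [move: xY | move: yY | move: zY]; apply: contra (sXY _).
Qed.

Lemma cherry_or_matching_off (X : {set V}) : cherry_off X \/ matching_off X.
Proof.
case: (classic (matching_off X)) => [hm|nm]; [by right | left].
apply: NNPP => nch; apply: nm => x y z rxy rxz xX yX zX.
by case: (eqVneq y z) => // yz; case: nch; exists x, y, z; split.
Qed.

Hypothesis R_irr : irreflexive R.

Lemma R_neq x y : R x y -> x != y.
Proof. by apply: contraTneq => ->; rewrite R_irr. Qed.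

Lemma matching_off_small (X : {set V}) : #|~: X| <= 2 -> matching_off X.
Proof.
move=> small x y z rxy rxz xX yX zX; apply: contraTeq small => yz.
rewrite -ltnNge; apply/card_gt2P; exists x, y, z; rewrite !inE xX yX zX.
by rewrite (R_neq rxy) yz eq_sym (R_neq rxz).
Qed.

Hypothesis R_sym : symmetric R.

Lemma cherry_off_C4 a b c d (X : {set V}) : R a b -> R b c -> R c d -> R d a ->
  a != c -> b != d -> #|X| <= 1 -> cherry_off X.
Proof.
move=> rab rbc rcd rda ac bd X1.
have := (R_neq rab, R_neq rbc, R_neq rcd, R_neq rda) => -[[[ab bc] cd] da].
have out x y : x \in X -> y != x -> y \notin X by apply: card_le1_notin.
case: (boolP (a \in X)) => [aX|aX].
  exists c, b, d; split; try (apply: (out a); rewrite // eq_sym //).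
  by split; rewrite // R_sym.
case: (boolP (b \in X)) => [bX|bX].
  exists d, a, c; split; try (apply: (out b); rewrite // eq_sym //).
  by split; rewrite // R_sym.
case: (boolP (d \in X)) => [dX|dX].
  exists b, a, c; split; try (apply: (out d); rewrite // eq_sym //).
  by split; rewrite // R_sym.
by exists a, b, d; split=> //; split; rewrite // R_sym.
Qed.

Lemma cherry_off_hub a (X : {set V}) : (forall w, w != a -> R a w) ->
  cherry_off [set a] -> #|X| <= 1 -> cherry_off X.
Proof.
move=> hub ch X1; case: (boolP (a \in X)) => aX.
  apply: cherry_offS ch; apply/subsetP => x xX; rewrite inE.
  by apply/eqP; apply: (card_le1_eqP X1).
case: ch => v [p [q [va pa qa [pq rvp rvq]]]]; move: va pa qa; rewrite !in_set1.
have [vp vq] := (R_neq rvp, R_neq rvq).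
have out x y : x \in X -> y != x -> y \notin X by apply: card_le1_notin.
move=> va pa qa; case: (boolP (v \in X)) => [vX|vX].
  exists a, p, q; split; try (apply: (out v); rewrite // eq_sym //).
  by split=> //; apply: hub.
case: (boolP (p \in X)) => [pX|pX].
  exists a, v, q; split; try (apply: (out p); rewrite // eq_sym //).
  by split=> //; apply: hub.
by exists a, v, p; split=> //; split=> //; apply: hub.
Qed.
End CoverRelations.

Section StrongResolvingGame.
Variables (V : finType) (adj R : rel V).
Hypotheses (R_sym : symmetric R) (R_irr : irreflexive R).
Hypothesis resolvingE : forall M, strong_resolving adj M <-> covers R M.

(* Along a play from the empty board the fuel argument of maker_wins and
   breaker_wins equals the number of free vertices. *)
Local Notation free M B := (~: (M :|: B)).

Lemma card_free_addM (M B : {set V}) v : v \notin M :|: B ->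
  #|free M B| = #|free (v |: M) B|.+1.
Proof. by move=> vMB; rewrite -setUA; apply: card_setC_setU1. Qed.

Lemma card_free_addB (M B : {set V}) v : v \notin M :|: B ->
  #|free M B| = #|free M (v |: B)|.+1.
Proof. by move=> vMB; rewrite setUCA; apply: card_setC_setU1. Qed.

Lemma maker_wins_end k t (M B : {set V}) : #|free M B| = 0 -> covers R M ->
  maker_wins adj k t M B.
Proof.
move=> /eqP; rewrite cards_eq0 => /eqP full /resolvingE.
by case: k => [|k] /=; rewrite full eqxx.
Qed.

Lemma breaker_wins_end k t (M B : {set V}) : #|free M B| = 0 -> ~ covers R M ->
  breaker_wins adj k t M B.
Proof.
move=> /eqP; rewrite cards_eq0 => /eqP full nSR.
by case: k => [|k] /=; rewrite full eqxx => /resolvingE.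
Qed.

Lemma free_neq0 (M B : {set V}) v : v \notin M :|: B -> (free M B == set0) = false.
Proof. by move=> vMB; apply/negbTE/set0Pn; exists v; rewrite inE. Qed.

Lemma maker_wins_moveM (M B : {set V}) v : v \notin M :|: B ->
  maker_wins adj #|free (v |: M) B| false (v |: M) B ->
  maker_wins adj #|free M B| true M B.
Proof. by move=> vMB win; rewrite (card_free_addM vMB) /= (free_neq0 vMB); exists v. Qed.

Lemma maker_wins_moveB (M B : {set V}) v0 : v0 \notin M :|: B ->
  (forall v, v \notin M :|: B -> maker_wins adj #|free M (v |: B)| true M (v |: B)) ->
  maker_wins adj #|free M B| false M B.
Proof.
move=> v0MB win; rewrite (card_free_addB v0MB) /= (free_neq0 v0MB) => v vMB.
by have := card_free_addB v0MB; rewrite (card_free_addB vMB) => -[<-]; apply: win.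
Qed.

Lemma breaker_wins_moveM (M B : {set V}) v0 : v0 \notin M :|: B ->
  (forall v, v \notin M :|: B -> breaker_wins adj #|free (v |: M) B| false (v |: M) B) ->
  breaker_wins adj #|free M B| true M B.
Proof.
move=> v0MB win; rewrite (card_free_addM v0MB) /= (free_neq0 v0MB) => v vMB.
by have := card_free_addM v0MB; rewrite (card_free_addM vMB) => -[<-]; apply: win.
Qed.

Lemma breaker_wins_moveB (M B : {set V}) v : v \notin M :|: B ->
  breaker_wins adj #|free M (v |: B)| true M (v |: B) ->
  breaker_wins adj #|free M B| false M B.
Proof. by move=> vMB win; rewrite (card_free_addB vMB) /= (free_neq0 vMB); exists v. Qed.

Definition pairing_inv (M B : {set V}) :=
  (forall x y, R x y -> x \notin M -> y \notin M -> x \notin B) /\ matching_off R M.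

Lemma pairing_inv_addM (M B : {set V}) w : pairing_inv M B -> pairing_inv (w |: M) B.
Proof.
case=> untouched hmatch; split.
  move=> x y rxy; rewrite !in_setU1 !negb_or => /andP[_ xM] /andP[_ yM].
  exact: untouched rxy xM yM.
by apply: matching_offS hmatch; apply: subsetUr.
Qed.

Lemma pairing_inv_covers (M B : {set V}) : pairing_inv M B -> #|free M B| <= 1 -> covers R M.
Proof.
case=> untouched _ free1 x y rxy; apply/negPn/negP; rewrite negb_or => /andP[xM yM].
have xB := untouched x y rxy xM yM.
have yB : y \notin B by apply: (untouched y x) => //; rewrite R_sym.
move: free1; apply/negP; rewrite -ltnNge; apply/card_gt1P; exists x, y.
by rewrite !inE !negb_or xM xB yM yB (R_neq R_irr rxy).
Qed.

Lemma pairing_reply (M B : {set V}) v : pairing_inv M B -> v \notin M :|: B ->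
  1 < #|free M B| -> exists2 w, w \notin M :|: (v |: B) & pairing_inv (w |: M) (v |: B).
Proof.
move=> inv vMB free2; case: (inv) => untouched hmatch.
have [vM vB] : v \notin M /\ v \notin B by apply/norP; rewrite -in_setU.
suff [w wfree partner] : exists2 w, w \notin M :|: (v |: B) &
    forall y, R v y -> y \notin M -> y = w.
  exists w => //; have [_ hmatch'] := pairing_inv_addM w inv; split=> // x y rxy.
  rewrite !in_setU1 !negb_or => /andP[xw xM] /andP[yw yM]; rewrite (untouched x y) // andbT.
  by apply: contraNneq yw => xv; rewrite (partner y) // -xv.
case: (pickP (fun y => R v y && (y \notin M))) => [w /andP[rvw wM] | no_partner].
  exists w => [|y rvy yM]; last exact: hmatch rvy rvw vM yM wM.
  have wB : w \notin B by apply: (untouched w v) => //; rewrite R_sym.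
  by rewrite !inE !negb_or wM wB eq_sym (R_neq R_irr rvw).
have [u ufree uv] : exists2 u, u \in free M B & u != v.
  have [w [x [wfree xfree wx]]] := card_gt1P free2.
  by case: (eqVneq w v) => [wv|]; [exists x; rewrite // -wv eq_sym | exists w].
exists u => [|y rvy yM]; last by move: (no_partner y); rewrite /= rvy yM.
by move: ufree; rewrite !inE !negb_or uv => /andP[->].
Qed.

Lemma maker_wins_pairing t (M B : {set V}) : pairing_inv M B -> maker_wins adj #|free M B| t M B.
Proof.
move hn: #|free M B| => n; elim/ltn_ind: n t M B hn => n IH t M B hn inv.
case: n IH hn => [|n] IH hn.
  by apply: maker_wins_end => //; apply: pairing_inv_covers inv _; rewrite hn.
have [v vfree] : exists v, v \in free M B by apply/card_gt0P; rewrite hn.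
have vMB : v \notin M :|: B by move: vfree; rewrite inE.
rewrite -hn; case: t.
  apply: (maker_wins_moveM vMB); apply: IH (pairing_inv_addM v inv) => //.
  by rewrite -hn (card_free_addM vMB).
apply: (maker_wins_moveB vMB) => u uMB.
case: n IH hn => [|n] IH hn.
  apply: maker_wins_end; last by apply: pairing_inv_covers inv _; rewrite hn.
  by move: hn; rewrite (card_free_addB uMB) => -[].
have [|w wfree inv'] := pairing_reply inv uMB; first by rewrite hn.
apply: (maker_wins_moveM wfree); apply: IH inv' => //.
by rewrite -hn (card_free_addB uMB) (card_free_addM wfree) ltnS ltnW.
Qed.

Lemma breaker_wins_uncovered x y t (M B : {set V}) : R x y -> x \in B -> y \in B ->
  x \notin M -> y \notin M -> breaker_wins adj #|free M B| t M B.
Proof.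
move=> rxy; move hn: #|free M B| => n; elim: n t M B hn => [|n IH] t M B hn xB yB xM yM.
  by apply: breaker_wins_end => // /(_ x y rxy); rewrite (negbTE xM) (negbTE yM).
have [v vfree] : exists v, v \in free M B by apply/card_gt0P; rewrite hn.
have vMB : v \notin M :|: B by move: vfree; rewrite inE.
rewrite -hn; case: t.
  apply: (breaker_wins_moveM vMB) => u uMB.
  have notu z : z \in B -> z \notin M -> z \notin u |: M.
    move=> zB zM; rewrite in_setU1 negb_or zM andbT.
    by apply: contraNneq uMB => <-; rewrite inE zB orbT.
  have hu : #|free (u |: M) B| = n by move: hn; rewrite (card_free_addM uMB) => -[].
  by rewrite hu; apply: IH; rewrite ?notu.
apply: (breaker_wins_moveB vMB).
have hv : #|free M (v |: B)| = n by move: hn; rewrite (card_free_addB vMB) => -[].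
by rewrite hv; apply: IH; rewrite ?in_setU1 ?xB ?yB ?orbT.
Qed.

Lemma breaker_wins_cherry (M B : {set V}) : cherry_off R (M :|: B) ->
  breaker_wins adj #|free M B| false M B.
Proof.
case=> v [a [b [vMB aMB bMB [ab rva rvb]]]].
have av : a != v by rewrite eq_sym (R_neq R_irr rva).
have bv : b != v by rewrite eq_sym (R_neq R_irr rvb).
move: vMB aMB bMB; rewrite !inE !negb_or => /andP[vM vB] /andP[aM aB] /andP[bM bB].
apply: (breaker_wins_moveB (v := v)); first by rewrite !inE negb_or vM.
apply: (breaker_wins_moveM (v0 := a)); first by rewrite !inE !negb_or aM av.
move=> w; rewrite !inE !negb_or => /andP[wM /andP[wv wB]].
pose c := if w == a then b else a.
have [cM cB cv cw] : [/\ c \notin M, c \notin B, c != v & c != w].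
  by rewrite /c; case: (eqVneq w a) => [->|wa]; split; rewrite // eq_sym.
have rvc : R v c by rewrite /c; case: ifP.
apply: (breaker_wins_moveB (v := c)); first by rewrite !inE !negb_or cw cM cv.
apply: (@breaker_wins_uncovered v c) => //.
- by rewrite !inE eqxx orbT.
- by rewrite setU11.
- by rewrite !inE negb_or eq_sym wv.
- by rewrite !inE negb_or cw.
Qed.

Lemma card_free0 : #|free set0 set0 : {set V}| = #|V|.
Proof. by rewrite setU0 setC0 cardsT. Qed.

Lemma notin_set0U0 v : v \notin (set0 :|: set0 : {set V}).
Proof. by rewrite setU0 inE. Qed.

Lemma OSR_M_of_matching : matching_off R set0 -> OSR_M adj.
Proof.
move=> hmatch; have inv : pairing_inv set0 set0 by split=> // x y; rewrite inE.
by split; rewrite /maker_wins_Mgame /maker_wins_Bgame -card_free0; apply: maker_wins_pairing.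
Qed.

Lemma OSR_N_of_cherry_matching u : cherry_off R set0 -> matching_off R [set u] -> OSR_N adj.
Proof.
move=> hcherry hmatch; split; rewrite /maker_wins_Mgame /breaker_wins_Bgame -card_free0.
  apply: (maker_wins_moveM (notin_set0U0 u)); apply: maker_wins_pairing.
  by split=> [x y|]; rewrite ?setU0 ?inE.
by apply: breaker_wins_cherry; rewrite setU0.
Qed.

Lemma OSR_B_of_cherries : (forall X : {set V}, #|X| <= 1 -> cherry_off R X) -> OSR_B adj.
Proof.
move=> hcherry; have [|v _] := hcherry set0; first by rewrite cards0.
split; rewrite /breaker_wins_Mgame /breaker_wins_Bgame -card_free0.
  apply: (breaker_wins_moveM (notin_set0U0 v)) => u _.
  by apply: breaker_wins_cherry; rewrite !setU0; apply: hcherry; rewrite cards1.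
by apply: breaker_wins_cherry; rewrite setU0; apply: hcherry; rewrite cards0.
Qed.

End StrongResolvingGame.

Section Geodesics.
Variables (V : finType) (adj : rel V).

Lemma on_geodesic_edge x y z : adj y z -> y != z -> x \in [:: y; z] ->
  on_geodesic adj x y z.
Proof.
move=> ayz yz xyz; exists [:: z]; split => //=; first by rewrite ayz.
by case=> [|? ?] //= _ yz'; move: yz; rewrite yz' eqxx.
Qed.

Lemma on_geodesic_2path x y m z : adj y m -> adj m z -> ~~ adj y z -> y != z ->
  x \in [:: y; m; z] -> on_geodesic adj x y z.
Proof.
move=> aym amz nayz yz xymz; exists [:: m; z]; split => //=; first by rewrite aym amz.
case=> [|q1 [|q2 q]] //= => [_ yz'|/andP[ayq1 _] q1z]; first by move: yz; rewrite yz' eqxx.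
by move: nayz; rewrite -q1z ayq1.
Qed.

End Geodesics.

Definition twins (T : finType) (e : rel T) (x y : T) :=
  [forall w, (w != x) ==> (w != y) ==> (e x w == e y w)].

(* Two vertices of H are mutually maximally distant in K_1 (.) H, which has
   diameter at most 2, iff they are non-adjacent or adjacent true twins. *)
Definition mmd (T : finType) (e : rel T) (x y : T) := (x != y) && (~~ e x y || twins e x y).

Definition corona_mmd (T : finType) (e : rel T) : rel (option T) :=
  fun u v => if (u, v) is (Some x, Some y) then mmd e x y else false.

Section Corona.
Variables (T : finType) (e : rel T).
Hypothesis e_sym : symmetric e.
Local Notation adj := (corona_adj e).

Lemma twinsP x y w : twins e x y -> w != x -> w != y -> e x w = e y w.
Proof. by move/forallP/(_ w) => + wx wy; rewrite wx wy => /eqP. Qed.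

Lemma mmd_sym : symmetric (mmd e).
Proof.
move=> x y; rewrite /mmd eq_sym e_sym; congr (_ && (_ || _)).
by apply/forallP/forallP => h w; move: (h w); case: (w != x); case: (w != y); rewrite //= eq_sym.
Qed.

Lemma mmd_irr : irreflexive (mmd e).
Proof. by move=> x; rewrite /mmd eqxx. Qed.

Lemma corona_mmd_sym : symmetric (corona_mmd e).
Proof. by rewrite /corona_mmd; case=> [x|] [y|] //=; rewrite mmd_sym. Qed.

Lemma corona_mmd_irr : irreflexive (corona_mmd e).
Proof. by rewrite /corona_mmd; case=> [x|] //=; rewrite mmd_irr. Qed.

Lemma on_geodesic_target u v : u != v -> on_geodesic adj u v u.
Proof.
move=> uv; case avu: (adj v u).
  by apply: on_geodesic_edge; rewrite // 1?eq_sym ?inE ?eqxx ?orbT.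
case: u v uv avu => [x|] [y|] //= xy eyx.
apply: (on_geodesic_2path (m := None)) => //=; first by rewrite eyx.
  by rewrite eq_sym.
by rewrite !inE eqxx !orbT.
Qed.

Lemma corona_mmd_off_geodesic u v z : corona_mmd e u v -> z != u -> z != v ->
  ~ on_geodesic adj u v z.
Proof.
case: u v => [x|] [y|] //; rewrite /corona_mmd => mxy zx zy [p [ypath ylast xin pmin]].
have xy : Some x != Some y by case/andP: mxy.
have short : size p <= 2.
  case: z {zx zy} ylast pmin => [w|] ylast pmin; first exact: (pmin [:: None; Some w]).
  exact: leq_trans (pmin [:: None] _ _) _.
case: p ypath ylast xin pmin short => [|a [|b [|? ?]]] //=.
- by move=> _ yz; move: zy; rewrite -yz eqxx.
- by move=> _ ->; rewrite !inE (negbTE xy) eq_sym (negbTE zx).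
move=> /and3P[eya eab _] bz; subst b.
rewrite !inE (negbTE xy) [_ == z]eq_sym (negbTE zx) orbF => /eqP xa; subst a.
move=> pmin _; case: z zx zy eab pmin => [w|] wx wy exw pmin; last first.
  by move: (pmin [:: None] isT erefl).
have neyw : ~~ e y w.
  by apply/negP => eyw; have := pmin [:: Some w]; rewrite /= eyw => /(_ isT erefl).
case/andP: mxy => _; rewrite e_sym eya /= => /twinsP/(_ wx wy) exy.
by move: neyw; rewrite -exy (exw : e x w).
Qed.

Lemma covers_of_resolving M : strong_resolving adj M -> covers (corona_mmd e) M.
Proof.
move=> SR u v ruv; apply/negPn/negP; rewrite negb_or => /andP[uM vM].
have [z zM geo] := SR u v (R_neq corona_mmd_irr ruv).
have [zu zv] : z != u /\ z != v by split; [apply: contraNneq uM | apply: contraNneq vM] => <-.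
case: geo; first exact: corona_mmd_off_geodesic.
by apply: corona_mmd_off_geodesic; rewrite // corona_mmd_sym.
Qed.

Lemma geodesic_of_not_mmd a b : Some a != Some b -> ~~ mmd e a b -> exists w,
  mmd e b w /\ on_geodesic adj (Some a) (Some b) (Some w) \/
  mmd e a w /\ on_geodesic adj (Some b) (Some a) (Some w).
Proof.
move=> ab; rewrite /mmd ab negb_or negbK => /andP[eab /forallPn[w]].
rewrite !negb_imply => /and3P[wa wb ne]; exists w; move: ne.
case eaw: (e a w); case ebw: (e b w) => //= _.
- left; split; first by rewrite eq_sym wb.
  apply: (on_geodesic_2path (m := Some a)) => //=.
  + by rewrite e_sym.
  + by rewrite ebw.
  + by rewrite eq_sym.
  + by rewrite !inE eqxx orbT.
- right; split; first by rewrite eq_sym wa.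
  apply: (on_geodesic_2path (m := Some b)) => //=.
  + by rewrite eaw.
  + by rewrite eq_sym.
  + by rewrite !inE eqxx orbT.
Qed.

Hypothesis nonadj_exists : forall x, exists2 y, y != x & ~~ e x y.

Lemma resolving_of_covers M : covers (corona_mmd e) M -> strong_resolving adj M.
Proof.
move=> cover u v uv.
have partner x y : corona_mmd e x y -> x \notin M -> y \in M.
  by move=> rxy; have := cover x y rxy; case: (x \in M).
case: (boolP (u \in M)) => [uM|uM]; first by exists u => //; left; apply: on_geodesic_target.
case: (boolP (v \in M)) => [vM|vM].
  by exists v => //; right; apply: on_geodesic_target; rewrite eq_sym.
have center b : Some b \notin M -> exists2 z, z \in M & on_geodesic adj None (Some b) z.
  move=> bM; have [c cb nebc] := nonadj_exists b.
  exists (Some c); first by apply: partner bM; rewrite /corona_mmd /mmd eq_sym cb nebc.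
  by apply: (on_geodesic_2path (m := None)); rewrite //= ?inE ?eqxx // eq_sym.
case: u v uv uM vM => [a|] [b|] //= ab aM bM; last first.
- by have [z zM geo] := center b bM; exists z => //; left.
- by have [z zM geo] := center a aM; exists z => //; right.
have nab : ~~ mmd e a b by apply: contra bM => rab; exact: (partner (Some a) (Some b)).
have [w [[rbw geo] | [raw geo]]] := geodesic_of_not_mmd ab nab.
- by exists (Some w); [apply: partner bM | left].
- by exists (Some w); [apply: partner aM | right].
Qed.

Lemma corona_resolvingE M : strong_resolving adj M <-> covers (corona_mmd e) M.
Proof. by split; [apply: covers_of_resolving | apply: resolving_of_covers]. Qed.

Lemma cherry_off_corona (X : {set option T}) :
  cherry_off (mmd e) (Some @^-1: X) -> cherry_off (corona_mmd e) X.
Proof.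
case=> v [a [b [vX aX bX rest]]]; exists (Some v), (Some a), (Some b).
by move: vX aX bX; rewrite !inE.
Qed.

Lemma matching_off_corona (X : {set option T}) :
  matching_off (mmd e) (Some @^-1: X) -> matching_off (corona_mmd e) X.
Proof.
move=> hmatch [x|] [y|] [z|] //= rxy rxz xX yX zX; congr Some.
by apply: (hmatch x); rewrite ?inE.
Qed.

Lemma card_preimset_Some (X : {set option T}) : #|Some @^-1: X| <= #|X|.
Proof.
rewrite -(card_imset _ (@Some_inj _)); apply: subset_leq_card.
by apply/subsetP => _ /imsetP[x + ->]; rewrite inE.
Qed.

Lemma corona_OSR_B : (forall X : {set T}, #|X| <= 1 -> cherry_off (mmd e) X) ->
  OSR_B (corona_adj e).
Proof.
move=> hcherry; apply: (OSR_B_of_cherries corona_mmd_irr corona_resolvingE).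
move=> X X1; apply: cherry_off_corona; apply: hcherry.
exact: leq_trans (card_preimset_Some X) X1.
Qed.

Lemma corona_OSR_N x : cherry_off (mmd e) set0 -> matching_off (mmd e) [set x] ->
  OSR_N (corona_adj e).
Proof.
move=> hcherry hmatch.
apply: (OSR_N_of_cherry_matching corona_mmd_sym corona_mmd_irr corona_resolvingE (u := Some x)).
  by apply: cherry_off_corona; rewrite preimset0.
by apply: matching_off_corona; congr (matching_off _ _): hmatch; apply/setP => y; rewrite !inE.
Qed.

Lemma corona_OSR_M : matching_off (mmd e) set0 -> OSR_M (corona_adj e).
Proof.
move=> hmatch; apply: (OSR_M_of_matching corona_mmd_sym corona_mmd_irr corona_resolvingE).
by apply: matching_off_corona; rewrite preimset0.
Qed.

End Corona.

Lemma isomorphic_card (T1 T2 : finType) (e1 : rel T1) (e2 : rel T2) :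
  isomorphic e1 e2 -> #|T1| = #|T2|.
Proof. by case=> f [/bij_eq_card]. Qed.

Lemma isomorphic_edgeless (T : finType) (e : rel T) :
  (forall x y, e x y = false) -> isomorphic e (edgeless #|T|).
Proof.
move=> noedge; exists enum_rank; split; first exact: (Bijective (@enum_rankK T) (@enum_valK T)).
by move=> x y; rewrite noedge.
Qed.

Lemma isomorphic_complete (U : finType) (f : rel U) :
  (forall x y, f x y = (x != y)) -> isomorphic f (complete #|U|).
Proof.
move=> hf; exists enum_rank; split; first exact: (Bijective (@enum_rankK U) (@enum_valK U)).
by move=> x y; rewrite hf /complete (inj_eq enum_rank_inj).
Qed.

Lemma isomorphic_of_seq (U : finType) (f : rel U) n (r : rel 'I_n) (s : seq U) x0 :
  uniq s -> size s = n -> #|U| = n ->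
  (forall i j : 'I_n, f (nth x0 s i) (nth x0 s j) = r i j) -> isomorphic f r.
Proof.
move=> us sn Un hr; have s_all := enum_of_card us (etrans sn (esym Un)).
have idx x : index x s < n by rewrite -sn index_mem s_all.
exists (fun x => Ordinal (idx x)); split.
  exists (fun i : 'I_n => nth x0 s i) => [x | i]; first by rewrite /= nth_index.
  by apply: val_inj; rewrite /= index_uniq // sn.
by move=> x y; rewrite -hr /= !nth_index.
Qed.

Section Isomorphisms.
Variables (T1 T2 T3 : finType) (e1 : rel T1) (e2 : rel T2) (e3 : rel T3).

Lemma isomorphic_trans : isomorphic e1 e2 -> isomorphic e2 e3 -> isomorphic e1 e3.
Proof.
case=> f [bf hf] [g [bg hg]]; exists (g \o f); split; first exact: bij_comp.
by move=> x y; rewrite /= hg hf.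
Qed.

Lemma isomorphic_gunionr (T0 : finType) (e0 : rel T0) :
  isomorphic e2 e3 -> isomorphic (gunion e0 e2) (gunion e0 e3).
Proof.
case=> g [[g' gK g'K] hg].
exists (fun u : T0 + T2 => match u with inl x => inl x | inr x => inr (g x) end); split.
  exists (fun u : T0 + T3 => match u with inl x => inl x | inr x => inr (g' x) end).
    by case=> x; rewrite ?gK.
  by case=> x; rewrite ?g'K.
by case=> x [] y //=.
Qed.

Lemma mmd_isomorphic (h : T1 -> T2) : bijective h -> (forall x y, e2 (h x) (h y) = e1 x y) ->
  forall x y, mmd e2 (h x) (h y) = mmd e1 x y.
Proof.
move=> [h' hK h'K] hh x y; rewrite /mmd (can_eq hK) hh; congr (_ && (_ || _)).
apply/forallP/forallP => tw w; first by have := tw (h w); rewrite !(can_eq hK) !hh.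
by rewrite -(h'K w) !(can_eq hK) !hh; apply: tw.
Qed.

Lemma matching_isomorphic t : isomorphic e1 e2 -> matching_off (mmd e2) [set t] ->
  exists x, matching_off (mmd e1) [set x].
Proof.
case=> h [bh hh] hmatch; have [h' hK h'K] := bh; exists (h' t) => x y z rxy rxz.
rewrite !inE -!(can2_eq hK h'K) => xt yt zt; apply: (can_inj hK).
by apply: (hmatch (h x)); rewrite ?mmd_isomorphic ?inE.
Qed.

End Isomorphisms.

Lemma mmd_gunion_inr (T0 U : finType) (e0 : rel T0) (f : rel U) x y :
  mmd (gunion e0 f) (inr x) (inr y) = mmd f x y.
Proof.
rewrite /mmd /= (inj_eq (@inr_inj _ _)); congr (_ && (_ || _)).
apply/forallP/forallP => tw w; first by have := tw (inr w); rewrite !(inj_eq (@inr_inj _ _)).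
by case: w => [i|w] //=; have := tw w; rewrite !(inj_eq (@inr_inj _ _)).
Qed.

Lemma matching_K1_union (U : finType) (f : rel U) : matching_off (mmd f) set0 ->
  matching_off (mmd (gunion (edgeless 1) f)) [set inl ord0].
Proof.
move=> hmatch [i|x] [j|y] [k|z]; rewrite ?(ord1 i) ?(ord1 j) ?(ord1 k) ?inE ?eqxx //.
by rewrite !mmd_gunion_inr => rxy rxz _ _ _; congr inr; apply: (hmatch x); rewrite ?inE.
Qed.

Section Components.
Variables (T : finType) (e : rel T).
Hypotheses (e_sym : symmetric e) (e_irr : irreflexive e).

Lemma connectC x y : connect e x y = connect e y x.
Proof. exact: sym_connect_sym. Qed.

Lemma component_eq x y : ([set z | connect e x z] == [set z | connect e y z]) = connect e x y.
Proof.
apply/eqP/idP => [/setP/(_ y) | xy]; first by rewrite !inE connect0.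
by apply/setP => z; rewrite !inE; apply/idP/idP; apply: connect_trans; rewrite // connectC.
Qed.

Lemma ncomp_le_card : ncomp e <= #|T|.
Proof. exact: leq_imset_card. Qed.

Lemma no_edges_of_ncomp_card : ncomp e = #|T| -> forall x y, e x y = false.
Proof.
move=> /eqP /imset_injP comp_inj x y; apply/negP => exy.
have xy : x = y by apply: comp_inj; rewrite ?inE //; apply/eqP; rewrite component_eq connect1.
by move: exy; rewrite xy e_irr.
Qed.

Lemma two_components : 1 < ncomp e -> exists x y, ~~ connect e x y.
Proof.
by move=> /card_gt1P[_ [_ [/imsetP[x _ ->] /imsetP[y _ ->]]]]; rewrite component_eq; exists x, y.
Qed.

Lemma three_components : 2 < ncomp e ->
  exists x y z, [/\ ~~ connect e x y, ~~ connect e x z & ~~ connect e y z].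
Proof.
move=> /card_gt2P[_ [_ [_ [[/imsetP[x _ ->] /imsetP[y _ ->] /imsetP[z _ ->]]]]]].
by rewrite !component_eq => -[xy yz zx]; exists x, y, z; split; rewrite // connectC.
Qed.

Lemma third_component x y z : ~~ connect e x y -> ~~ connect e x z -> ~~ connect e y z ->
  2 < ncomp e.
Proof.
move=> xy xz yz; apply/card_gt2P.
exists [set w | connect e x w], [set w | connect e y w], [set w | connect e z w].
by rewrite !imset_f // !component_eq [connect e z x]connectC.
Qed.

Lemma neq_of_disconnected x y : ~~ connect e x y -> x != y.
Proof. by apply: contraNneq => ->; apply: connect0. Qed.

Lemma nonadj_of_disconnected x y : ~~ connect e x y -> ~~ e x y.
Proof. exact/contra/connect1. Qed.

Lemma mmd_of_disconnected x y : ~~ connect e x y -> mmd e x y.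
Proof. by move=> nxy; rewrite /mmd neq_of_disconnected // nonadj_of_disconnected. Qed.

Lemma nonadj_exists_of_ncomp : 1 < ncomp e -> forall x, exists2 y, y != x & ~~ e x y.
Proof.
move=> /two_components[p [q npq]] x.
have [y nxy] : exists y, ~~ connect e x y.
  case: (boolP (connect e p x)) => px; [exists q | exists p; rewrite connectC //].
  by apply: contra npq => /(connect_trans px).
by exists y; [rewrite eq_sym; apply: neq_of_disconnected | apply: nonadj_of_disconnected].
Qed.

Lemma cherries_of_three_components x y z w :
  ~~ connect e x y -> ~~ connect e x z -> ~~ connect e y z ->
  w != x -> ~~ connect e y w -> ~~ connect e z w ->
  forall X : {set T}, #|X| <= 1 -> cherry_off (mmd e) X.
Proof.
move=> xy xz yz wx yw zw X X1; rewrite connectC in xy.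
apply: (cherry_off_C4 (mmd_irr e) (mmd_sym e_sym) (a := y) (b := x) (c := z) (d := w)) => //.
- exact: mmd_of_disconnected.
- exact: mmd_of_disconnected.
- exact: mmd_of_disconnected.
- by rewrite mmd_sym //; apply: mmd_of_disconnected.
- exact: neq_of_disconnected.
- by rewrite eq_sym.
Qed.

Lemma cherries_of_ncomp3 : 2 < ncomp e -> ~ isomorphic e (edgeless 3) ->
  forall X : {set T}, #|X| <= 1 -> cherry_off (mmd e) X.
Proof.
move=> ncomp3 not3K1; have [x [y [z [xy xz yz]]]] := three_components ncomp3.
case: (leqP #|T| 3) => [cardT3 | cardT4].
  case: not3K1; have ncompT : ncomp e = #|T|.
    by apply/eqP; rewrite eqn_leq ncomp_le_card (leq_trans cardT3).
  rewrite -(_ : #|T| = 3); first exact/isomorphic_edgeless/no_edges_of_ncomp_card.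
  by apply/eqP; rewrite eqn_leq cardT3 -ncompT.
have [w] := exists_notin (s := [:: x; y; z]) cardT4; rewrite !inE !negb_or => /and3P[wx wy wz].
have far u v : connect e u w -> ~~ connect e u v -> ~~ connect e v w.
  by move=> uw; apply: contra => vw; apply: connect_trans uw _; rewrite connectC.
case: (boolP (connect e x w)) => [xw | nxw].
  by apply: (cherries_of_three_components xy xz yz wx); apply: far xw _.
have yx : ~~ connect e y x by rewrite connectC.
case: (boolP (connect e y w)) => [yw | nyw].
  by apply: (cherries_of_three_components yx yz xz wy nxw); apply: far yw _.
have [zx zy] : ~~ connect e z x /\ ~~ connect e z y by rewrite !(connectC z).
exact: (cherries_of_three_components zx zy xy wz nxw nyw).
Qed.

Lemma cherry_of_ncomp2 : 1 < ncomp e -> 2 < #|T| -> cherry_off (mmd e) set0.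
Proof.
move=> /two_components[x [y xy]] /(exists_notin (s := [:: x; y])) [w].
rewrite !inE negb_or => /andP[wx wy].
case: (boolP (connect e x w)) => [xw | xw].
  have yw : ~~ connect e y w by apply: contra xy => yw; apply: connect_trans xw _; rewrite connectC.
  exists y, x, w; rewrite !inE eq_sym wx mmd_sym //.
  by split=> //; split=> //; apply: mmd_of_disconnected; rewrite // connectC.
exists x, y, w; rewrite !inE eq_sym wy.
by split=> //; split=> //; apply: mmd_of_disconnected.
Qed.

End Components.

Section NearComplete.
Variables (U : finType) (f : rel U).
Hypotheses (f_sym : symmetric f) (f_irr : irreflexive f).

Definition non_neighbours w := [set y | (y != w) && ~~ f w y].

Lemma deg_add_non_neighbours w : deg f w + #|non_neighbours w| = #|U| - 1.
Proof.
rewrite subn1 -(cardsC1 w) -(cardsID [set y | f w y] [set~ w]) /deg.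
congr (_ + _); apply: eq_card => y; rewrite !inE andbC //.
by case: (eqVneq y w) => [->|]; rewrite ?f_irr ?andbT.
Qed.

Lemma deg_universal w : (deg f w == #|U| - 1) = (non_neighbours w == set0).
Proof. by rewrite -cards_eq0; have := deg_add_non_neighbours w; lia. Qed.

Lemma universalP w : reflect (forall y, y != w -> f w y) (non_neighbours w == set0).
Proof.
apply: (iffP eqP) => [N0 y yw | univ].
  by apply: contraT => nwy; have := in_set0 y; rewrite -N0 /non_neighbours !inE yw nwy.
by apply/setP => y; rewrite !inE; case: (eqVneq y w) => //= yw; rewrite univ.
Qed.

Lemma deg_near_complete w :
  (deg f w = #|U| - 2 \/ deg f w = #|U| - 1) <-> #|non_neighbours w| <= 1.
Proof.
have U0 : 0 < #|U| by apply/card_gt0P; exists w.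
have := deg_add_non_neighbours w; move: (deg f w) #|non_neighbours w| U0 => d n U0 sum.
by split; lia.
Qed.

Lemma mmd_non_neighbour w y : y \in non_neighbours w -> mmd f w y.
Proof. by rewrite inE /mmd eq_sym => /andP[-> ->]. Qed.

Lemma mmd_universal x y : x != y -> non_neighbours x == set0 -> non_neighbours y == set0 ->
  mmd f x y.
Proof.
move=> xy /universalP ux /universalP uy; rewrite /mmd xy orbC; apply/orP; left.
by apply/forallP => w; apply/implyP => wx; apply/implyP => wy; rewrite ux ?uy.
Qed.

Section Matching.
Hypothesis matching : matching_off (mmd f) set0.

Lemma card_non_neighbours_le1 w : #|non_neighbours w| <= 1.
Proof.
apply/card_le1_eqP => t1 t2 /mmd_non_neighbour r1 /mmd_non_neighbour r2.
by apply: (matching r2 r1); rewrite inE.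
Qed.

Lemma card_universal_le2 : #|[set w | non_neighbours w == set0]| <= 2.
Proof.
rewrite leqNgt; apply/negP => /card_gt2P[x [y [z [[]]]]]; rewrite !inE => ux uy uz [xy yz zx].
have := matching (mmd_universal xy ux uy) (mmd_universal _ ux uz).
by rewrite !inE eq_sym => /(_ zx isT isT isT) /eqP; rewrite (negbTE yz).
Qed.

Lemma connected_of_matching : 2 < #|U| -> connected_graph f.
Proof.
move=> U3 x y; case: (eqVneq x y) => [-> | xy]; first exact: connect0.
case fxy: (f x y); first exact: connect1.
have [z] := exists_notin (s := [:: x; y]) U3; rewrite !inE negb_or => /andP[zx zy].
have nn w t1 t2 : t1 \in non_neighbours w -> t2 \in non_neighbours w -> t1 = t2.
  by move=> t1w t2w; apply: (card_le1_eqP (card_non_neighbours_le1 w)).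
have y_nn : y \in non_neighbours x by rewrite inE eq_sym xy fxy.
have x_nn : x \in non_neighbours y by rewrite inE xy f_sym fxy.
have fxz : f x z by apply: contraTT zy => nfxz; rewrite negbK (nn x z y) // inE zx.
have fzy : f z y by apply: contraTT zx => nfzy; rewrite negbK (nn y z x) // inE zy f_sym.
exact: connect_trans (connect1 fxz) (connect1 fzy).
Qed.

End Matching.

Lemma matching_of_near_complete : (forall w, #|non_neighbours w| <= 1) ->
  #|[set w | non_neighbours w == set0]| <= 2 -> matching_off (mmd f) set0.
Proof.
move=> N1 U2 x y z /andP[xy rxy] /andP[xz rxz] _ _ _; apply/eqP/negPn/negP => yz.
have nn w t1 t2 : t1 != w -> t2 != w -> ~~ f w t1 -> ~~ f w t2 -> t1 = t2.
  by move=> t1w t2w n1 n2; apply: (card_le1_eqP (N1 w)); rewrite inE ?t1w ?t2w.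
have mixed u v : u != x -> v != x -> u != v -> ~~ f x u -> twins f x v -> False.
  move=> ux vx uv nxu txv; have nvu : ~~ f v u by rewrite -(twinsP txv) // eq_sym.
  by move: vx; rewrite (nn u x v) ?eqxx // 1?eq_sym // f_sym.
case fxy: (f x y) rxy => /= rxy; case fxz: (f x z) rxz => /= rxz.
- have univ v : twins f x v -> f x v -> forall w, w != v -> f v w.
    move=> txv fxv w wv; have vx : v != x by apply: contraTneq fxv => ->; rewrite f_irr.
    case: (eqVneq w x) => [-> | wx]; first by rewrite f_sym.
    by rewrite -(twinsP txv) //; apply/negPn/negP => nxw; apply: (mixed w v).
  have ux : forall w, w != x -> f x w.
    move=> w wx; apply/negPn/negP => nxw; apply: (mixed w y) => //; first by rewrite eq_sym.
    by apply: contraNneq nxw => ->.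
  move: U2; apply/negP; rewrite -ltnNge; apply/card_gt2P; exists x, y, z.
  split; last by split=> //; rewrite eq_sym.
  split; rewrite inE; apply/universalP.
  - exact: ux.
  - exact: univ rxy fxy.
  - exact: univ rxz fxz.
- by apply: (mixed z y); rewrite ?fxz // eq_sym.
- by apply: (mixed y z); rewrite ?fxy // eq_sym.
- by move: yz; rewrite (nn x y z) ?eqxx // 1?eq_sym // ?fxy ?fxz.
Qed.

Lemma isomorphic_K2 : #|U| = 2 -> (forall u, exists v, f u v) -> isomorphic f (complete 2).
Proof.
move=> U2 nbr; rewrite -U2; apply: isomorphic_complete => x y.
case: (eqVneq x y) => [-> | xy]; first exact: f_irr.
have [z fxz] := nbr x; have xz := R_neq f_irr fxz.
have := enum_of_card (_ : uniq [:: x; y]) (esym U2) z; rewrite !inE eq_sym (negbTE xz) /=.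
by rewrite inE xy => /(_ isT)/eqP <-.
Qed.

Lemma isomorphic_P3 : #|U| = 3 -> (forall u, exists v, f u v) -> matching_off (mmd f) set0 ->
  isomorphic f (pathg 3).
Proof.
move=> U3 nbr hmatch.
have [p Np] : exists p, non_neighbours p != set0.
  apply/existsP; rewrite -negb_forall; apply: contraTN (card_universal_le2 hmatch) => /forallP univ.
  by rewrite -ltnNge (_ : [set w | _] = setT) ?cardsT ?U3 //; apply/setP => w; rewrite !inE univ.
have [q] := set0Pn _ Np; rewrite inE => /andP[qp nfpq].
have [c fpc] := nbr p; have cp : c != p by rewrite eq_sym (R_neq f_irr fpc).
have cq : c != q by apply: contraTneq fpc => ->.
have upcq : uniq [:: p; c; q] by rewrite /= !inE negb_or eq_sym cp eq_sym qp cq.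
have fcq : f c q.
  have [c' fqc'] := nbr q; have := enum_of_card upcq (esym U3) c'.
  rewrite !inE [c' == q]eq_sym (negbTE (R_neq f_irr fqc')) orbF => /orP[] /eqP c'E; subst c'.
    by move: nfpq; rewrite f_sym fqc'.
  by rewrite f_sym.
apply: (isomorphic_of_seq (x0 := p) upcq) => // i j.
have [fcp fqc fqp] : [/\ f c p, f q c & f q p = false].
  by rewrite !(f_sym _ p) fpc f_sym fcq (negbTE nfpq).
case: i j => [[|[|[|//]]] ?] [[|[|[|//]]] ?].
all: by rewrite /pathg /= ?f_irr ?fpc ?fcq ?fcp ?fqc ?fqp ?(negbTE nfpq).
Qed.

End NearComplete.

Lemma mmd_path3 (i j : 'I_3) : mmd (pathg 3) i j -> i + j = 2.
Proof.
case/andP => ij /orP[]; case: i j ij => [[|[|[|//]]] hi] [[|[|[|//]]] hj] //= _.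
all: try by move/(twinsP (w := inord 2));
  rewrite /pathg -!(inj_eq val_inj) /= inordK // => /(_ isT isT).
all: by move/(twinsP (w := inord 0));
  rewrite /pathg -!(inj_eq val_inj) /= inordK // => /(_ isT isT).
Qed.

Section CaseN2.
Variables (T : finType) (e : rel T).

Lemma K1_union_matching (U : finType) (g : rel U) :
  isomorphic e (gunion (edgeless 1) g) -> 1 < #|U| -> matching_off (mmd g) set0 ->
  2 < #|T| /\ exists x, matching_off (mmd e) [set x].
Proof.
move=> iso U2 hmatch; split; first by rewrite (isomorphic_card iso) card_sum card_ord.
exact: matching_isomorphic iso (matching_K1_union hmatch).
Qed.

Lemma caseN2_matching : caseN2 e -> 2 < #|T| /\ exists x, matching_off (mmd e) [set x].
Proof.
case=> [iso | [iso | [U [f [f_sym f_irr _ U4 [deg_f univ_f iso]]]]]].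
- apply: (K1_union_matching iso); rewrite ?card_ord //.
  by apply: (matching_off_small (mmd_irr _)); rewrite setC0 cardsT card_ord.
- apply: (K1_union_matching iso); rewrite ?card_ord // => x y z /mmd_path3 xy /mmd_path3 xz _ _ _.
  by apply: ord_inj; lia.
apply: (K1_union_matching iso); first exact: leq_trans U4.
apply: matching_of_near_complete => // [w | ]; first exact/(deg_near_complete f_irr).
by under eq_finset => w do rewrite -deg_universal //.
Qed.

End CaseN2.

Definition remove_vertex (T : finType) (e : rel T) (a : T) : rel {x : T | x != a} :=
  fun x y => e (val x) (val y).
Arguments remove_vertex {T} e a.

Section IsolatedVertex.
Variables (T : finType) (e : rel T) (a : T).
Hypotheses (e_sym : symmetric e) (e_irr : irreflexive e) (a_isolated : forall w, e a w = false).
Local Notation G := (remove_vertex e a).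

Lemma isomorphic_K1_union : isomorphic e (gunion (edgeless 1) G).
Proof.
pose h x : 'I_1 + {x : T | x != a} :=
  if insub x : option {x : T | x != a} is Some u then inr u else inl ord0.
have hval u : h (val u) = inr u by rewrite /h valK.
have ha : h a = inl ord0 by rewrite /h insubF ?eqxx.
exists h; split.
  exists (fun u => if u is inr v then val v else a) => [x | [i|u]]; rewrite ?hval //.
    by rewrite /h; case: insubP => [u _ <- // | /negbNE/eqP ->].
  by rewrite ha (ord1 i).
move=> x y; case: (eqVneq x a) => [-> | xa]; case: (eqVneq y a) => [-> | ya];
  rewrite ?ha ?a_isolated ?e_irr // ?(e_sym _ a) ?a_isolated //.
- by rewrite -[y]/(val (Sub y ya : {x | x != a})) hval.
- by rewrite -[x]/(val (Sub x xa : {x | x != a})) hval.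
by rewrite -[x]/(val (Sub x xa : {x | x != a})) -[y]/(val (Sub y ya : {x | x != a})) !hval.
Qed.

Lemma mmd_remove_isolated x y : mmd G x y = mmd e (val x) (val y).
Proof.
rewrite /mmd (inj_eq val_inj); congr (_ && (_ || _)).
apply/forallP/forallP => tw w; last by have := tw (val w); rewrite !(inj_eq val_inj).
case: (eqVneq w a) => [-> | wa]; first by rewrite !(e_sym _ a) !a_isolated !implybT.
by have := tw (Sub w wa); rewrite -!(inj_eq val_inj) /=.
Qed.

Lemma matching_remove_isolated : matching_off (mmd e) [set a] -> matching_off (mmd G) set0.
Proof.
move=> hmatch x y z; rewrite !mmd_remove_isolated => rxy rxz _ _ _; apply: val_inj.
by apply: (hmatch _ _ _ rxy rxz); rewrite inE ?(valP x) ?(valP y) ?(valP z).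
Qed.

Lemma caseN2_of_isolated : (forall x, x != a -> exists y, e x y) -> 2 < #|T| ->
  matching_off (mmd e) [set a] -> caseN2 e.
Proof.
move=> others T3 /matching_remove_isolated hmatch.
have cardG : #|{: {x : T | x != a}}| = #|T|.-1 by rewrite card_sig cardC1.
have G_irr : irreflexive G by move=> x; apply: e_irr.
have G_sym : symmetric G by move=> x y; apply: e_sym.
have nbrG u : exists v, G u v.
  have [y exy] := others _ (valP u).
  have ya : y != a by apply: contraTneq exy => ->; rewrite e_sym a_isolated.
  by exists (Sub y ya).
case: (ltngtP #|T| 4) => [T3' | T5 | T4].
- left; apply: isomorphic_trans isomorphic_K1_union (isomorphic_gunionr _ _).
  by apply: isomorphic_K2 => //; rewrite cardG; move: T3 T3'; case: #|T| => [|[|[|[|]]]].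
- right; right; exists (Finite.clone {x : T | x != a} _), G.
  have G4 : 3 < #|{: {x : T | x != a}}| by rewrite cardG -ltnS prednK // ltnW // ltnW.
  split=> //; first exact: connected_of_matching (leq_trans _ G4).
  split; last exact: isomorphic_K1_union.
    by move=> w; apply/deg_near_complete => //; apply: card_non_neighbours_le1.
  under eq_finset => w do rewrite deg_universal //.
  exact: card_universal_le2.
right; left; apply: isomorphic_trans isomorphic_K1_union (isomorphic_gunionr _ _).
by apply: isomorphic_P3; rewrite ?cardG ?T4.
Qed.

End IsolatedVertex.

Section TwoComponents.
Variables (T : finType) (e : rel T).
Hypotheses (e_sym : symmetric e) (e_irr : irreflexive e).

Lemma connect_isolated a z : (forall w, e a w = false) -> connect e a z -> z = a.
Proof.
by move=> iso /connectP[[|w p] /=]; [move=> _ -> | rewrite iso].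
Qed.

Lemma cherries_or_isolated_vertex : ncomp e = 2 -> 2 < #|T| ->
  (forall X : {set T}, #|X| <= 1 -> cherry_off (mmd e) X) \/
  exists a, (forall w, e a w = false) /\ (forall x, x != a -> exists y, e x y).
Proof.
move=> ncomp2 T3.
case: (pickP (fun a => [forall w, ~~ e a w])) => [a /forallP a_iso | nonisolated].
  have {}a_iso w : e a w = false by apply: negbTE.
  right; exists a; split=> // x xa; apply: NNPP => nx.
  have x_iso w : e x w = false by apply/negP => exw; apply: nx; exists w.
  have [z] := exists_notin (s := [:: a; x]) T3; rewrite !inE negb_or => /andP[za zx].
  have sep u v : (forall w, e u w = false) -> v != u -> ~~ connect e u v.
    by move=> u_iso vu; apply: contra vu => /(connect_isolated u_iso)/eqP.
  have := third_component e_sym (sep a x a_iso xa) (sep a z a_iso za) (sep x z x_iso zx).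
  by rewrite ncomp2.
have nbr a : exists y, e a y.
  by move: (nonisolated a) => /negbT/forallPn[y]; rewrite negbK; exists y.
left; have [x [y xy]] : exists x y, ~~ connect e x y by apply: two_components; rewrite ?ncomp2.
have [[x' exx'] [y' eyy']] := (nbr x, nbr y).
have far u u' v : e u u' -> ~~ connect e u v -> ~~ connect e u' v.
  by move=> euu'; apply: contra; apply: connect_trans (connect1 euu').
have yx : ~~ connect e y x by rewrite connectC.
move=> X; apply: (cherry_off_C4 (mmd_irr e) (mmd_sym e_sym) (a := x) (b := y) (c := x') (d := y')).
- exact: mmd_of_disconnected.
- by rewrite mmd_sym //; apply/mmd_of_disconnected/(far _ _ _ exx').
- by apply/mmd_of_disconnected/(far _ _ _ exx'); rewrite connectC //; apply: (far _ _ _ eyy').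
- by apply/mmd_of_disconnected/(far _ _ _ eyy').
- by move: (R_neq e_irr exx').
- by move: (R_neq e_irr eyy').
Qed.

Lemma cherries_of_not_caseN2 : ncomp e = 2 -> 2 < #|T| -> ~ caseN2 e ->
  forall X : {set T}, #|X| <= 1 -> cherry_off (mmd e) X.
Proof.
move=> ncomp2 T3 notN2 X X1.
case: (cherries_or_isolated_vertex ncomp2 T3) => [/(_ X X1) // | [a [a_iso others]]].
case: (cherry_or_matching_off (mmd e) [set a]) => [cherry_a | matching_a].
  by apply: (cherry_off_hub (mmd_irr e) _ cherry_a X1) => w wa; rewrite /mmd eq_sym wa a_iso.
by case: notN2; apply: (caseN2_of_isolated e_sym e_irr a_iso).
Qed.

Lemma card_gt2_of_ncomp2 : ncomp e = 2 -> ~ isomorphic e (edgeless 2) -> 2 < #|T|.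
Proof.
move=> ncomp2 not2K1; rewrite ltn_neqAle -{2}ncomp2 ncomp_le_card andbT.
apply/eqP => T2; apply: not2K1; rewrite T2.
by apply/isomorphic_edgeless/no_edges_of_ncomp_card => //; rewrite ncomp2.
Qed.

End TwoComponents.

Unset Implicit Arguments.
Set Strict Implicit.
Theorem mainTheorem11 (T : finType) (e : rel T) :
  symmetric e -> irreflexive e -> 2 <= ncomp e ->
  [/\ 4 <= ncomp e -> OSR_B (corona_adj e),
      ncomp e = 3 ->
        (isomorphic e (edgeless 3) -> OSR_N (corona_adj e)) /\
        (~ isomorphic e (edgeless 3) -> OSR_B (corona_adj e))
    & ncomp e = 2 ->
        [/\ isomorphic e (edgeless 2) -> OSR_M (corona_adj e),
            caseN2 e -> OSR_N (corona_adj e)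
          & ~ isomorphic e (edgeless 2) -> ~ caseN2 e -> OSR_B (corona_adj e)]].
Proof.
move=> e_sym e_irr ncomp_ge2.
have nonadj := nonadj_exists_of_ncomp e_sym ncomp_ge2.
have OSR_B_of := corona_OSR_B e_sym nonadj.
have OSR_N_of x : 2 < #|T| -> matching_off (mmd e) [set x] -> OSR_N (corona_adj e).
  by move=> T3; apply: (corona_OSR_N e_sym nonadj); apply: cherry_of_ncomp2.
split.
- move=> ncomp4; apply/OSR_B_of/cherries_of_ncomp3 => //; first exact: ltnW.
  move/isomorphic_card; rewrite card_ord => T3.
  by have := ncomp_le_card e; rewrite T3 leqNgt ncomp4.
- move=> ncomp3; split=> [iso3K1 | not3K1]; last first.
    by apply/OSR_B_of/cherries_of_ncomp3; rewrite ?ncomp3.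
  have T3 : #|T| = 3 by rewrite (isomorphic_card iso3K1) card_ord.
  have [x _] : exists x : T, x \in T by apply/card_gt0P; rewrite T3.
  apply: (OSR_N_of x); rewrite ?T3 //.
  by apply: (matching_off_small (mmd_irr e)); rewrite cardsC1 T3.
- move=> ncomp2; split=> [iso2K1 | /caseN2_matching [T3 [x hx]] | not2K1 notN2].
  + apply: (corona_OSR_M e_sym nonadj); apply: (matching_off_small (mmd_irr e)).
    by rewrite setC0 cardsT (isomorphic_card iso2K1) card_ord.
  + exact: OSR_N_of hx.
  + by apply/OSR_B_of/cherries_of_not_caseN2 => //; apply: card_gt2_of_ncomp2.
Qed.
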